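(* The category of exact $\mathfrak{K}$-modules $M$ with $\alpha_{21}=0$ is equivalent to the category of triples $(M_0,\dot M_2,\dot\alpha)$ where (i) $M_0$ is a $\mathbb{Z}/2$-graded $\mathfrak{S}$-module with $\ker(1-t)=\operatorname{im}N(t)$; (ii) $\dot M_2\subseteq H_0(M_0):=\ker N(t)/\operatorname{im}(1-t)$ is a $\mathbb{Z}/2$-graded $\mathbb{Z}/p$-vector subspace; (iii) $\dot\alpha\colon\dot M_2\to H_0(M_0)/\dot M_2$ is a grading-reversing isomorphism. Morphisms of triples $(M_0,\dot M_2,\dot\alpha)\to(L_0,\dot L_2,\dot\beta)$ are grading-preserving $\mathfrak{S}$-module homomorphisms $f_0\colon M_0\to L_0$ such that $H_0(f_0)$ maps $\dot M_2$ to $\dot L_2$ and intertwines $\dot\alpha$ and $\dot\beta$. The homomorphism of exact $\mathfrak{K}$-modules induced by a morphism of triples $f_0$ is injective if and only if $f_0$ is injective and $f_0^{-1}(\tilde L_2)=\tilde M_2$; it is surjective if and only if $f_0$ is surjective and $f_0(\tilde M_2)=\tilde L_2$, where $\tilde M_2\subseteq\ker N(t)\subseteq M_0$ and $\tilde L_2\subseteq L_0$ denote the preimages of $\dot M_2$ and $\dot L_2$.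
   Context: Fix a prime $p$, $N(x)=1+x+\dots+x^{p-1}$, $\mathfrak{S}=\mathbb{Z}[t]/(t^p-1)$. A $\mathfrak{K}$-module $M$ amounts to $\mathbb{Z}/2$-graded abelian groups $M_0,M_1,M_2$ with homomorphisms $\alpha_{jk}\colon M_k\to M_j$ ($j\neq k$; $\alpha_{12},\alpha_{21}$ grading-reversing, others grading-preserving) with $\alpha_{jk}\alpha_{km}=0$ for $\{j,k,m\}=\{0,1,2\}$ and, for $t_0:=1-\alpha_{02}\alpha_{20}$ on $M_0$, $s_1:=1-\alpha_{12}\alpha_{21}$ on $M_1$, $t_2:=1-\alpha_{20}\alpha_{02}$, $s_2:=1-\alpha_{21}\alpha_{12}$ on $M_2$: $\alpha_{01}\alpha_{10}=N(t_0)$, $\alpha_{10}\alpha_{01}=N(s_1)$, $N(t_2)+N(s_2)=p$; morphisms are triples of grading-preserving maps commuting with all $\alpha_{jk}$. $M$ is exact if the cyclic sequences $M_0\xrightarrow{\alpha_{10}}M_1\xrightarrow{\alpha_{21}}M_2\xrightarrow{\alpha_{02}}M_0$ and $M_0\xrightarrow{\alpha_{20}}M_2\xrightarrow{\alpha_{12}}M_1\xrightarrow{\alpha_{01}}M_0$ are exact. The equivalence sends $M$ (with $\alpha_{21}=0$, so $\alpha_{02}$ is injective and $\alpha_{10}$ surjective with kernel $\alpha_{02}(M_2)$) to the triple with $M_0$ carrying $t=t_0$, $\dot M_2:=\alpha_{02}(M_2)/\operatorname{im}(1-t)$, and $\dot\alpha([\alpha_{02}(x)]):=[y]$ for $y\in\ker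 N(t)$ with $\alpha_{10}(y)=\alpha_{12}(x)$; it sends a $\mathfrak{K}$-module homomorphism to its component on $M_0$. *)

From HB Require Import structures.
From mathcomp Require Import all_boot all_algebra.
From mathcomp Require Import boolp.
From Stdlib Require Import ClassicalEpsilon.
Set Implicit Arguments. Unset Strict Implicit. Unset Printing Implicit Defensive.
Import GRing.Theory.
Local Open Scope ring_scope.

Definition gen (V : zmodType) (A : V -> Prop) (x : V) : Prop :=
  forall S : V -> Prop, S 0 -> (forall u v, S u -> S v -> S (u - v)) ->
    (forall u, A u -> S u) -> S x.

Lemma gen0 (V : zmodType) (A : V -> Prop) : gen A 0. Proof. by move=> S. Qed.
Arguments gen0 {V} A.
Lemma genB (V : zmodType) (A : V -> Prop) u v : gen A u -> gen A v -> gen A (u - v).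
Proof. rewrite /gen => hu hv S S0 SB SA; apply: (SB); [exact: (hu S S0 SB SA)|exact: (hv S S0 SB SA)]. Qed.
Arguments genB {V A u v}.
Lemma genN (V : zmodType) (A : V -> Prop) u : gen A u -> gen A (- u).
Proof. by move=> h; have := genB (gen0 A) h; rewrite sub0r. Qed.
Arguments genN {V A u}.
Lemma genD (V : zmodType) (A : V -> Prop) u v : gen A u -> gen A v -> gen A (u + v).
Proof. by move=> hu hv; have := genB hu (genN hv); rewrite opprK. Qed.
Arguments genD {V A u v}.

Definition rep (V : zmodType) (A B : V -> Prop) (x : V) : V :=
  choose (fun y => `[< gen A y /\ gen B (y - x) >]) x.

Lemma rep_spec (V : zmodType) (A B : V -> Prop) x :
  gen A x -> gen A (rep A B x) /\ gen B (rep A B x - x).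
Proof.
move=> hx.
have h := @chooseP V (fun y => `[< gen A y /\ gen B (y - x) >]) x.
have /asboolP // : `[< gen A (rep A B x) /\ gen B (rep A B x - x) >].
apply: h; apply/asboolP; split=> //.
by rewrite subrr; apply: gen0.
Qed.

Lemma rep_eq (V : zmodType) (A B : V -> Prop) x y :
  gen A x -> gen A y -> gen B (x - y) -> rep A B x = rep A B y.
Proof.
move=> hx hy hxy; rewrite /rep.
have E : (fun z => `[< gen A z /\ gen B (z - x) >]) =1
         (fun z => `[< gen A z /\ gen B (z - y) >]).
  move=> z; apply/asboolP/asboolP => -[hz h]; split=> //.
    by have := genD h hxy; rewrite addrA subrK.
  by have := genB h hxy; rewrite opprB addrA subrK.
rewrite (eq_choose E); apply: choose_id; apply/asboolP; split=> //.
  by rewrite subrr; apply: gen0.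
Qed.

Definition SQ (V : zmodType) (A B : V -> Prop) :=
  {x : V | `[< gen A x >] && (rep A B x == x)}.
HB.instance Definition _ (V : zmodType) (A B : V -> Prop) := Choice.on (SQ A B).

Definition cls_rep (V : zmodType) (A B : V -> Prop) (x : V) : V :=
  rep A B (if `[< gen A x >] then x else 0).

Lemma cls_proof (V : zmodType) (A B : V -> Prop) x :
  `[< gen A (cls_rep A B x) >] && (rep A B (cls_rep A B x) == cls_rep A B x).
Proof.
rewrite /cls_rep; set x' := (if _ then _ else _); have hx' : gen A x'.
  by rewrite /x'; case: asboolP => // _; apply: gen0.
have [hy hyx] := rep_spec B hx'.
apply/andP; split; first by apply/asboolP.
by apply/eqP; rewrite (rep_eq hy hx' hyx).
Qed.

(* the class of x (x is assumed to lie in the generated subgroup of A) *)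
Definition cls (V : zmodType) (A B : V -> Prop) (x : V) : SQ A B :=
  @exist V (fun y => `[< gen A y >] && (rep A B y == y)) _ (cls_proof A B x).

Lemma SQ_gen (V : zmodType) (A B : V -> Prop) (a : SQ A B) : gen A (sval a).
Proof. by case: a => x /= /andP[/asboolP]. Qed.

Lemma cls_val (V : zmodType) (A B : V -> Prop) (a : SQ A B) : cls A B (sval a) = a.
Proof.
apply: val_inj; case: a => x /= /andP[/asboolP hx /eqP rx].
by rewrite /= /cls_rep (asboolT hx).
Qed.

Lemma cls_rel (V : zmodType) (A B : V -> Prop) x :
  gen A x -> gen B (sval (cls A B x) - x).
Proof. by move=> hx /=; rewrite /cls_rep (asboolT hx); case: (rep_spec B hx). Qed.

Lemma cls_eq (V : zmodType) (A B : V -> Prop) x y :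
  gen A x -> gen A y -> gen B (x - y) -> cls A B x = cls A B y.
Proof.
move=> hx hy hxy; apply: val_inj => /=.
by rewrite /cls_rep (asboolT hx) (asboolT hy); apply: rep_eq.
Qed.

Definition sq_zero (V : zmodType) (A B : V -> Prop) : SQ A B := cls A B 0.
Definition sq_add (V : zmodType) (A B : V -> Prop) (a b : SQ A B) : SQ A B :=
  cls A B (sval a + sval b).
Definition sq_opp (V : zmodType) (A B : V -> Prop) (a : SQ A B) : SQ A B :=
  cls A B (- sval a).

Lemma zid4 (V:zmodType) (a b c r1 r2 : V) :
  a + r2 - (r1 + c) = - (r1 - (a + b) - (r2 - (b + c))).
Proof.
rewrite !opprD !opprK !addrA.
by rewrite [- r1 + a + b + r2]addrAC addrK -[- r1 + a + r2]addrA [- r1 + _]addrC.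
Qed.

Lemma sq_addA (V : zmodType) (A B : V -> Prop) : associative (@sq_add V A B).
Proof.
move=> a b c; rewrite /sq_add.
have ha := SQ_gen a; have hb := SQ_gen b; have hc := SQ_gen c.
have hab := genD ha hb; have hbc := genD hb hc.
apply: cls_eq; [apply: genD=> //; apply: SQ_gen | apply: genD=> //; apply: SQ_gen|].
rewrite (zid4 _ (sval b)); apply: genN.
exact: genB (cls_rel (B:=B) hab) (cls_rel (B:=B) hbc).
Qed.

Lemma sq_addC (V : zmodType) (A B : V -> Prop) : commutative (@sq_add V A B).
Proof. by move=> a b; rewrite /sq_add addrC. Qed.

Lemma sq_add0r (V : zmodType) (A B : V -> Prop) : left_id (@sq_zero V A B) (@sq_add V A B).
Proof.
move=> a; rewrite /sq_add /sq_zero -[RHS]cls_val.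
have h0 := cls_rel (B:=B) (gen0 A).
apply: cls_eq; [apply: genD=> //; apply: SQ_gen | exact: SQ_gen |].
by rewrite addrK; move: h0; rewrite subr0.
Qed.

Lemma sq_addNr (V : zmodType) (A B : V -> Prop) :
  left_inverse (@sq_zero V A B) (@sq_opp V A B) (@sq_add V A B).
Proof.
move=> a; rewrite /sq_add /sq_zero /sq_opp.
have ha := SQ_gen a; have hN := cls_rel (B:=B) (genN ha).
apply: cls_eq; [apply: genD=> //; apply: SQ_gen | exact: gen0 |].
by rewrite subr0; move: hN; rewrite opprK.
Qed.

HB.instance Definition _ (V : zmodType) (A B : V -> Prop) :=
  GRing.isZmodule.Build (SQ A B) (@sq_addA V A B) (@sq_addC V A B)
    (@sq_add0r V A B) (@sq_addNr V A B).

Definition sqmap (V W : zmodType) (A B : V -> Prop) (A' B' : W -> Prop)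
  (f : V -> W) (x : SQ A B) : SQ A' B' := cls A' B' (f (sval x)).
Arguments sqmap {V W A B A' B'} f x.
Arguments cls {V} A B x.

(* subgroup D of H, as an abelian group, and quotient H / D *)
Definition subg {H : zmodType} (D : H -> Prop) : zmodType := SQ D (fun x => x = 0).
Definition quog {H : zmodType} (D : H -> Prop) : zmodType := SQ (fun _ => True) D.

Unset Implicit Arguments.
Definition additive_fn {U W : zmodType} (f : U -> W) : Prop :=
  forall x y, f (x - y) = f x - f y.
Definition surj {U W : Type} (f : U -> W) : Prop := forall y, exists x, f x = y.

(* Z/2-graded abelian group: its homogeneous components, indexed by the degree *)
Definition grp := bool -> zmodType.
Definition nn (G : grp) (b : bool) : G (~~ ~~ b) -> G b :=
  match b return G (~~ ~~ b) -> G b with true => id | false => id end.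

Definition Nop (p : nat) {V : zmodType} (f : V -> V) (x : V) : V :=
  \sum_(i < p) iter i f x.

Record KData := KD {
  K0 : grp; K1 : grp; K2 : grp;
  a10 : forall b, K0 b -> K1 b;
  a01 : forall b, K1 b -> K0 b;
  a20 : forall b, K0 b -> K2 b;
  a02 : forall b, K2 b -> K0 b;
  a12 : forall b, K2 b -> K1 (~~ b);
  a21 : forall b, K1 b -> K2 (~~ b) }.

Definition t0 (M : KData) b (x : K0 M b) : K0 M b := x - a02 M b (a20 M b x).
Definition s1 (M : KData) b (y : K1 M b) : K1 M b :=
  y - nn (K1 M) b (a12 M (~~ b) (a21 M b y)).
Definition t2 (M : KData) b (z : K2 M b) : K2 M b := z - a20 M b (a02 M b z).
Definition s2 (M : KData) b (z : K2 M b) : K2 M b :=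
  z - nn (K2 M) b (a21 M (~~ b) (a12 M b z)).

Record is_Kmodule (p : nat) (M : KData) : Prop := {
  a10_add : forall b, additive_fn (a10 M b);
  a01_add : forall b, additive_fn (a01 M b);
  a20_add : forall b, additive_fn (a20 M b);
  a02_add : forall b, additive_fn (a02 M b);
  a12_add : forall b, additive_fn (a12 M b);
  a21_add : forall b, additive_fn (a21 M b);
  rel012 : forall b z, a01 M (~~ b) (a12 M b z) = 0;
  rel021 : forall b y, a02 M (~~ b) (a21 M b y) = 0;
  rel102 : forall b z, a10 M b (a02 M b z) = 0;
  rel120 : forall b x, a12 M b (a20 M b x) = 0;
  rel201 : forall b y, a20 M b (a01 M b y) = 0;
  rel210 : forall b x, a21 M b (a10 M b x) = 0;
  relN0 : forall b x, a01 M b (a10 M b x) = Nop p (t0 M b) x;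
  relN1 : forall b y, a10 M b (a01 M b y) = Nop p (s1 M b) y;
  relN2 : forall b z, Nop p (t2 M b) z + Nop p (s2 M b) z = z *+ p }.

(* exactness of M0 -a10-> M1 -a21-> M2 -a02-> M0 and M0 -a20-> M2 -a12-> M1 -a01-> M0 *)
Record is_exact (M : KData) : Prop := {
  ex1 : forall b (y : K1 M b), a21 M b y = 0 <-> exists x, a10 M b x = y;
  ex2 : forall b (z : K2 M (~~ b)), a02 M (~~ b) z = 0 <-> exists y, a21 M b y = z;
  ex0 : forall b (x : K0 M b), a10 M b x = 0 <-> exists z, a02 M b z = x;
  ex2' : forall b (z : K2 M b), a12 M b z = 0 <-> exists x, a20 M b x = z;
  ex1' : forall b (y : K1 M (~~ b)), a01 M (~~ b) y = 0 <-> exists z, a12 M b z = y;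
  ex0' : forall b (x : K0 M b), a20 M b x = 0 <-> exists y, a01 M b y = x }.

Definition Kexact0 (p : nat) (M : KData) : Prop :=
  is_Kmodule p M /\ is_exact M /\ (forall b y, a21 M b y = 0).

Record KHom (M L : KData) := KH {
  h0 : forall b, K0 M b -> K0 L b;
  h1 : forall b, K1 M b -> K1 L b;
  h2 : forall b, K2 M b -> K2 L b }.
Arguments h0 {M L} k b.
Arguments h1 {M L} k b.
Arguments h2 {M L} k b.

Record is_Khom (M L : KData) (f : KHom M L) : Prop := {
  h0_add : forall b, additive_fn (h0 f b);
  h1_add : forall b, additive_fn (h1 f b);
  h2_add : forall b, additive_fn (h2 f b);
  c10 : forall b x, h1 f b (a10 M b x) = a10 L b (h0 f b x);
  c01 : forall b y, h0 f b (a01 M b y) = a01 L b (h1 f b y);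
  c20 : forall b x, h2 f b (a20 M b x) = a20 L b (h0 f b x);
  c02 : forall b z, h0 f b (a02 M b z) = a02 L b (h2 f b z);
  c12 : forall b z, h1 f (~~ b) (a12 M b z) = a12 L b (h2 f b z);
  c21 : forall b y, h2 f (~~ b) (a21 M b y) = a21 L b (h1 f b y) }.

Definition kerN (p : nat) {V : zmodType} (t : V -> V) : V -> Prop :=
  fun x => Nop p t x = 0.
Definition im1t {V : zmodType} (t : V -> V) : V -> Prop :=
  fun x => exists y, y - t y = x.
Definition H0 (p : nat) {V : zmodType} (t : V -> V) : zmodType :=
  SQ (kerN p t) (im1t t).
Definition H0cls (p : nat) {V : zmodType} (t : V -> V) (x : V) : H0 p t :=
  cls (kerN p t) (im1t t) x.

Record TData (p : nat) := TD {
  T0 : grp;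
  tt : forall b, T0 b -> T0 b;
  D2 : forall b, H0 p (tt b) -> Prop;
  al : forall b, subg (D2 b) -> quog (D2 (~~ b)) }.
Arguments T0 {p} t b.
Arguments tt {p} t b.
Arguments D2 {p} t b.
Arguments al {p} t b.

(* Z/p-vector subspace (scalars k mod p act as x *+ k) *)
Definition zp_subspace {H : zmodType} (D : H -> Prop) : Prop :=
  D 0 /\ (forall x y, D x -> D y -> D (x - y)) /\ (forall (k : nat) x, D x -> D (x *+ k)).

Record is_triple (p : nat) (T : TData p) : Prop := {
  tt_add : forall b, additive_fn (tt T b);
  tt_p : forall b x, iter p (tt T b) x = x;
  tt_ker : forall b x, x - tt T b x = 0 <-> exists y, Nop p (tt T b) y = x;
  D2_sub : forall b, zp_subspace (D2 T b);
  al_add : forall b, additive_fn (al T b);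
  al_bij : forall b, bijective (al T b) }.

Definition H0map {p : nat} {T T' : TData p} (f : forall b, T0 T b -> T0 T' b) b :
  H0 p (tt T b) -> H0 p (tt T' b) := sqmap (f b).

Record is_tmorph (p : nat) (T T' : TData p) (f : forall b, T0 T b -> T0 T' b) : Prop := {
  tm_add : forall b, additive_fn (f b);
  tm_t : forall b x, f b (tt T b x) = tt T' b (f b x);
  tm_D2 : forall b h, D2 T b h -> D2 T' b (H0map f b h);
  tm_al : forall b (u : subg (D2 T b)),
    al T' b (sqmap (H0map f b) u) = sqmap (H0map f (~~ b)) (al T b u) }.

Definition tilde {p : nat} (T : TData p) b (x : T0 T b) : Prop :=
  Nop p (tt T b) x = 0 /\ D2 T b (H0cls p (tt T b) x).

Definition Fal (p : nat) (M : KData)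
  (D : forall b, H0 p (t0 M b) -> Prop) b (u : subg (D b)) : quog (D (~~ b)) :=
  let x := sval (sval u) in
  let z := epsilon (inhabits (0 : K2 M b)) (fun z => a02 M b z = x) in
  let y := epsilon (inhabits (0 : K0 M (~~ b)))
             (fun y => Nop p (t0 M (~~ b)) y = 0 /\ a10 M (~~ b) y = a12 M b z) in
  cls _ _ (H0cls p (t0 M (~~ b)) y).

Definition FD2 (p : nat) (M : KData) b : H0 p (t0 M b) -> Prop :=
  fun h => exists z : K2 M b, H0cls p (t0 M b) (a02 M b z) = h.

Definition Ftri (p : nat) (M : KData) : TData p :=
  @TD p (K0 M) (t0 M) (FD2 p M) (Fal p M (FD2 p M)).

From HB Require Import structures.
From mathcomp Require Import all_boot all_algebra.
From Stdlib Require Import ClassicalEpsilon.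
Set Implicit Arguments. Unset Strict Implicit. Unset Printing Implicit Defensive.
Import GRing.Theory.
Local Open Scope ring_scope.

(* If alpha_21 = 0, exactness makes alpha_02 injective and alpha_10 surjective with kernel
   alpha_02(M_2), which lies in ker N(t).  Hence M_2 is M~_2 := alpha_02(M_2), M_1 is
   M_0 / M~_2, and M is recovered from M_0, the preimage M~_2 of dot M_2 in ker N(t), and
   alpha_12.  Since alpha_10 embeds H_0(M_0) / dot M_2 into M_1, the map dot alpha is
   alpha_12 seen through this embedding; the remaining exactness conditions say precisely
   that ker (1 - t) = im N(t) and that dot alpha is bijective.  Conversely a triple yields
   M_1 := M_0 / M~_2, M_2 := M~_2, alpha_20 := 1 - t, alpha_01 := N(t), and alpha_12 induced
   by dot alpha.  For morphisms, f_1 and f_2 are forced by f_0 (alpha_10 is onto, alpha_02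
   is one-to-one); they exist iff f_0 preserves M~_2, and commute with alpha_12 iff H_0(f_0)
   intertwines the dot alphas. *)

Section AdditiveFn.
Variables (U W : zmodType) (f : U -> W).
Hypothesis f_additive : additive_fn f.
Let fA : {additive U -> W} := HB.pack f (GRing.isZmodMorphism.Build U W f f_additive).

Lemma additive_fn0 : f 0 = 0. Proof. exact: (raddf0 fA). Qed.
Lemma additive_fnN x : f (- x) = - f x. Proof. exact: (raddfN fA). Qed.
Lemma additive_fnMn x n : f (x *+ n) = f x *+ n. Proof. exact: (raddfMn fA). Qed.
Lemma additive_fn_sum n (F : 'I_n -> U) : f (\sum_(i < n) F i) = \sum_(i < n) f (F i).
Proof. exact: (raddf_sum fA). Qed.
Lemma additive_fn_inj : (forall x, f x = 0 -> x = 0) -> injective f.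
Proof. exact: (raddf_inj (f := fA)). Qed.

End AdditiveFn.

Lemma additive_fn_iter (U : zmodType) (t : U -> U) n :
  additive_fn t -> additive_fn (iter n t).
Proof. by move=> ht; elim: n => [|n IH] x y //=; rewrite IH ht. Qed.

Lemma additive_fn_Nop p (U : zmodType) (t : U -> U) :
  additive_fn t -> additive_fn (Nop p t).
Proof. by move=> ht x y; rewrite /Nop -sumrB; apply: eq_bigr => i _; apply: additive_fn_iter. Qed.

Lemma Nop_morph p (U W : zmodType) (f : U -> W) t t' x :
  additive_fn f -> (forall x, f (t x) = t' (f x)) -> f (Nop p t x) = Nop p t' (f x).
Proof.
move=> hf ht; rewrite /Nop additive_fn_sum //; apply: eq_bigr => i _.
by elim: (nat_of_ord i) => [|n IH] //=; rewrite ht IH.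
Qed.

Lemma eq_Nop p (U : zmodType) (t t' : U -> U) x : t =1 t' -> Nop p t x = Nop p t' x.
Proof.
move=> e; rewrite /Nop; apply: eq_bigr => i _.
by elim: (nat_of_ord i) => [|n IH] //=; rewrite IH e.
Qed.

Lemma Nop_id p (U : zmodType) (x : U) : Nop p id x = x *+ p.
Proof. by rewrite /Nop (eq_bigr (fun _ => x)) ?sumr_const ?card_ord // => i _; elim: (val i). Qed.

Lemma Nop_subr n (U : zmodType) (t : U -> U) x :
  additive_fn t -> Nop n t x - t (Nop n t x) = x - iter n t x.
Proof.
move=> ht; have NSr : Nop n.+1 t x = Nop n t x + iter n t x by rewrite /Nop big_ord_recr.
have NSl : Nop n.+1 t x = x + t (Nop n t x).
  by rewrite /Nop big_ord_recl additive_fn_sum.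
by apply/eqP; rewrite subr_eq addrAC -NSl NSr addrK.
Qed.

Definition subgroup (V : zmodType) (A : V -> Prop) : Prop :=
  A 0 /\ forall u v, A u -> A v -> A (u - v).

Section Subgroup.
Variables (V : zmodType) (A : V -> Prop).

Lemma gen_in x : A x -> gen A x.
Proof. by move=> hx S _ _; apply. Qed.

Hypothesis A_subgroup : subgroup A.

Lemma genE x : gen A x <-> A x.
Proof. by split; [case: A_subgroup => h0 hB hx; apply: hx | apply: gen_in]. Qed.

Lemma subgroupD x y : A x -> A y -> A (x + y).
Proof.
case: A_subgroup => h0 hB hx hy.
have -> : x + y = x - (0 - y) by rewrite sub0r opprK.
by apply: (hB) => //; apply: hB.
Qed.

Lemma subgroup_sum n (F : 'I_n -> V) : (forall i, A (F i)) -> A (\sum_(i < n) F i).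
Proof. by move=> hF; apply: big_ind => //; [case: A_subgroup | apply: subgroupD]. Qed.

Lemma subgroup_zp_subspace : zp_subspace A.
Proof.
case: A_subgroup => h0 hB; do 2!split=> //.
by move=> k x hx; elim: k => [|k IH]; rewrite ?mulr0n // mulrS; apply: subgroupD.
Qed.

End Subgroup.

Lemma genT (V : zmodType) (x : V) : gen (fun _ => True) x.
Proof. exact: gen_in. Qed.

Lemma gen_map (V W : zmodType) (A : V -> Prop) (A' : W -> Prop) (f : V -> W) :
  additive_fn f -> (forall x, A x -> gen A' (f x)) -> forall x, gen A x -> gen A' (f x).
Proof.
move=> hf hA x hx; apply: (hx (fun x => gen A' (f x))) => //.
- by rewrite additive_fn0 //; apply: gen0.
- by move=> u v hu hv; rewrite hf; apply: genB.
Qed.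

Section Subquotient.
Variables (V : zmodType) (A B : V -> Prop).

Lemma cls_eqP x y : gen A x -> gen A y -> cls A B x = cls A B y <-> gen B (x - y).
Proof.
move=> hx hy; split; last exact: cls_eq.
move=> e; have := genB (cls_rel (B:=B) hy) (cls_rel (B:=B) hx).
by rewrite e opprB addrC addrA subrK.
Qed.

Lemma SQ_addE (a b : SQ A B) : a + b = cls A B (sval a + sval b).
Proof. by []. Qed.

Lemma SQ_oppE (a : SQ A B) : - a = cls A B (- sval a).
Proof. by []. Qed.

Lemma cls_add x y : gen A x -> gen A y -> cls A B (x + y) = cls A B x + cls A B y.
Proof.
move=> hx hy; rewrite SQ_addE; apply/cls_eqP; first exact: genD.
  by apply: genD; apply: SQ_gen.
have e a b : x + y - (a + b) = - ((a - x) + (b - y)).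
  by rewrite [RHS]opprD !opprB addrACA opprD.
by rewrite e; apply: genN; apply: genD; apply: cls_rel.
Qed.

Lemma cls_opp x : gen A x -> cls A B (- x) = - cls A B x.
Proof.
move=> hx; rewrite SQ_oppE; apply/cls_eqP; first exact: genN.
  by apply: genN; apply: SQ_gen.
have e a : - x - - a = a - x by rewrite opprK addrC.
by rewrite e; apply: cls_rel.
Qed.

Lemma cls_sub x y : gen A x -> gen A y -> cls A B (x - y) = cls A B x - cls A B y.
Proof. by move=> hx hy; rewrite cls_add ?cls_opp //; apply: genN. Qed.

Lemma cls0 : cls A B 0 = 0.
Proof. by []. Qed.

Lemma cls_eq0 x : gen A x -> cls A B x = 0 <-> gen B x.
Proof. by move=> hx; rewrite -cls0 cls_eqP ?subr0 //; apply: gen0. Qed.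

End Subquotient.

Lemma cls_additive (V : zmodType) (B : V -> Prop) : additive_fn (cls (fun _ => True) B).
Proof. by move=> x y; apply: cls_sub; apply: genT. Qed.

Section SubquotientMap.
Variables (V W : zmodType) (A B : V -> Prop) (A' B' : W -> Prop) (f : V -> W).
Hypotheses (f_additive : additive_fn f)
  (fA : forall x, A x -> gen A' (f x)) (fB : forall x, B x -> gen B' (f x)).

Lemma sqmap_cls x : gen A x -> sqmap f (cls A B x) = cls A' B' (f x).
Proof.
move=> hx; have gf := gen_map f_additive fA.
apply/cls_eqP; [by apply: gf; apply: SQ_gen | exact: gf |].
by rewrite -f_additive; apply: (gen_map f_additive fB); apply: cls_rel.
Qed.

Lemma sqmap_additive : additive_fn (sqmap f : SQ A B -> SQ A' B').
Proof.
move=> a b; have [ha hb] := (SQ_gen a, SQ_gen b); have hab := genB ha hb.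
have [fa fb] := (gen_map f_additive fA ha, gen_map f_additive fA hb).
by rewrite -(cls_val a) -(cls_val b) -cls_sub // !sqmap_cls // f_additive cls_sub.
Qed.

End SubquotientMap.

Lemma sqmap_cancel (V W : zmodType) (A B : V -> Prop) (A' B' : W -> Prop)
    (f : V -> W) (g : W -> V) :
  additive_fn f -> (forall x, A x -> gen A' (f x)) ->
  additive_fn g -> (forall y, A' y -> gen A (g y)) -> (forall y, B' y -> gen B (g y)) ->
  cancel f g -> cancel (sqmap f : SQ A B -> SQ A' B') (sqmap g).
Proof.
move=> hf fA hg gA gB fK a; rewrite {2}/sqmap sqmap_cls ?fK ?cls_val //.
by apply: (gen_map hf fA); apply: SQ_gen.
Qed.

Section SubgroupType.
Context {H : zmodType} {D : H -> Prop}.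

Lemma gen_eq0 (x : H) : gen (fun y => y = 0) x <-> x = 0.
Proof. by apply: genE; split=> // u v -> ->; rewrite subr0. Qed.

Lemma sval_cls_subg x : gen D x -> sval (cls D (fun y => y = 0) x) = x.
Proof. by move=> hx; apply/eqP; rewrite -subr_eq0; apply/eqP; apply/gen_eq0; apply: cls_rel. Qed.

Lemma sval_subg_additive : additive_fn (fun a : subg D => sval a).
Proof.
move=> a b; have [ha hb] := (SQ_gen a, SQ_gen b).
by rewrite -{1}(cls_val a) -{1}(cls_val b) -cls_sub // sval_cls_subg //; apply: genB.
Qed.

Lemma sval_subg_inj : injective (fun a : subg D => sval a).
Proof.
apply: additive_fn_inj; first exact: sval_subg_additive.
by move=> a ha; rewrite -(cls_val a) ha; apply/(cls_eq0 _ (gen0 D)); apply: gen0.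
Qed.

End SubgroupType.

Lemma sval_sqmap_subg (H H' : zmodType) (D : H -> Prop) (D' : H' -> Prop) (f : H -> H') :
  additive_fn f -> (forall x, D x -> gen D' (f x)) ->
  forall u : subg D, sval (sqmap f u : subg D') = f (sval u).
Proof. by move=> hf hD u; apply: sval_cls_subg; apply: (gen_map hf hD); apply: SQ_gen. Qed.

Section Homology.
Variables (p : nat) (V : zmodType) (t : V -> V).
Hypothesis t_additive : additive_fn t.

Lemma kerN_subgroup : subgroup (kerN p t).
Proof.
have hN := additive_fn_Nop p t_additive.
split; first by rewrite /kerN additive_fn0.
by move=> u v hu hv; rewrite /kerN hN hu hv subrr.
Qed.

Lemma im1t_subgroup : subgroup (im1t t).
Proof.
split; first by exists 0; rewrite additive_fn0 // subrr.
move=> _ _ [a <-] [c <-]; exists (a - c).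
by rewrite t_additive !opprD !opprK addrACA.
Qed.

Lemma kerN_sval (h : H0 p t) : kerN p t (sval h).
Proof. by apply/(genE kerN_subgroup); apply: SQ_gen. Qed.

Lemma H0cls_sval (h : H0 p t) : H0cls p t (sval h) = h.
Proof. exact: cls_val. Qed.

Lemma H0cls_eqP x y : kerN p t x -> kerN p t y ->
  H0cls p t x = H0cls p t y <-> im1t t (x - y).
Proof. by move=> hx hy; rewrite /H0cls cls_eqP ?(genE im1t_subgroup) ?(genE kerN_subgroup). Qed.

Lemma H0cls_eq0 x : kerN p t x -> H0cls p t x = 0 <-> im1t t x.
Proof. by move=> hx; rewrite /H0cls cls_eq0 ?(genE im1t_subgroup) ?(genE kerN_subgroup). Qed.

Lemma H0cls_sub x y : kerN p t x -> kerN p t y ->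
  H0cls p t (x - y) = H0cls p t x - H0cls p t y.
Proof. by move=> hx hy; apply: cls_sub; apply/(genE kerN_subgroup). Qed.

Lemma im1t_Nop_subr_mulrn x : im1t t (Nop p t x - x *+ p).
Proof.
have -> : x *+ p = \sum_(i < p) x by rewrite sumr_const card_ord.
rewrite /Nop -sumrB.
apply: (subgroup_sum im1t_subgroup) => i; exists (- Nop i t x).
by rewrite (additive_fnN t_additive) opprK addrC -[RHS]opprB -Nop_subr // opprB.
Qed.

Lemma im1t_kerN x : iter p t =1 id -> im1t t x -> kerN p t x.
Proof.
move=> tp [y <-]; rewrite /kerN additive_fn_Nop //.
by rewrite -(Nop_morph p y t_additive (fun=> erefl)) Nop_subr // tp subrr.
Qed.

End Homology.

Lemma kerN_map p (U W : zmodType) (t : U -> U) (t' : W -> W) (f : U -> W) x :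
  additive_fn f -> (forall x, f (t x) = t' (f x)) -> kerN p t x -> kerN p t' (f x).
Proof. by move=> hf ht hx; rewrite /kerN -(Nop_morph p x hf ht) hx additive_fn0. Qed.

Lemma im1t_map (U W : zmodType) (t : U -> U) (t' : W -> W) (f : U -> W) x :
  additive_fn f -> (forall x, f (t x) = t' (f x)) -> im1t t x -> im1t t' (f x).
Proof. by move=> hf ht [y <-]; exists (f y); rewrite hf ht. Qed.

Section H0map.
Variables (p : nat) (T T' : TData p) (f : forall b, T0 T b -> T0 T' b) (b : bool).
Arguments f : clear implicits.
Hypotheses (f_additive : additive_fn (f b))
  (f_tt : forall x, f b (tt T b x) = tt T' b (f b x)).

Lemma H0map_cls x : kerN p (tt T b) x ->
  H0map f b (H0cls p (tt T b) x) = H0cls p (tt T' b) (f b x).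
Proof.
move=> hx; apply: sqmap_cls => // [y|y|]; last exact: gen_in.
- by move/(kerN_map f_additive f_tt)/gen_in.
- by move/(im1t_map f_additive f_tt)/gen_in.
Qed.

Lemma H0map_additive : additive_fn (H0map f b).
Proof.
apply: sqmap_additive => // y.
- by move/(kerN_map f_additive f_tt)/gen_in.
- by move/(im1t_map f_additive f_tt)/gen_in.
Qed.

End H0map.

Section Factorization.
Variables (U V W : zmodType).

Definition lift_along (i : V -> W) (g : U -> W) (x : U) : V :=
  epsilon (inhabits 0) (fun v => i v = g x).

Definition descend_along (q : U -> V) (g : U -> W) (y : V) : W :=
  g (epsilon (inhabits 0) (fun x => q x = y)).

Variables (i : V -> W) (q : U -> V) (g : U -> W).

Lemma lift_alongK : (forall x, exists v, i v = g x) -> forall x, i (lift_along i g x) = g x.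
Proof. by move=> h x; apply: (epsilon_spec (inhabits 0) (fun v => i v = g x)). Qed.

Hypotheses (q_additive : additive_fn q) (g_additive : additive_fn g)
  (g_ker : forall x, q x = 0 -> g x = 0).

Lemma descend_alongK x : descend_along q g (q x) = g x.
Proof.
rewrite /descend_along; set x' := epsilon _ _.
have e : q x' = q x by apply: (epsilon_spec (inhabits 0) (fun x' => q x' = q x)); exists x.
by apply/eqP; rewrite -subr_eq0 -g_additive g_ker // q_additive e subrr.
Qed.

End Factorization.

Lemma inj_surj_bijective (U W : zmodType) (f : U -> W) : injective f -> surj f -> bijective f.
Proof.
move=> fi fs; have fK := lift_alongK (g := id) fs.
by exists (lift_along f id) => [x|//]; apply: fi; rewrite fK.
Qed.

Unset Implicit Arguments.

(* The embedding H_0(M_0) / dot M_2 -> M_1; through it dot alpha becomes alpha_12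
   (a10q_Fal), which is how dot alpha is handled throughout. *)
Definition a10q (p : nat) (M : KData) b (q : quog (FD2 p M b)) : K1 M b :=
  a10 M b (sval (sval q)).

Section ExactKmodule.
Context {p : nat} {M : KData} (hM : Kexact0 p M).
Let KM : is_Kmodule p M := hM.1.
Let EM : is_exact M := hM.2.1.

Lemma a02_inj b : injective (a02 M b).
Proof.
apply: additive_fn_inj => [|z]; first exact: a02_add KM b.
(* [ex2] is stated in degree [~~ b], hence the case split on the degree *)
case: b z => z hz; [case: ((ex2 _ EM false z).1 hz) | case: ((ex2 _ EM true z).1 hz)];
  by move=> y <-; exact: hM.2.2 _ y.
Qed.

Lemma a10_surj b : surj (a10 M b).
Proof. by move=> y; apply/(ex1 _ EM); apply: hM.2.2. Qed.

Lemma t0_additive b : additive_fn (t0 M b).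
Proof.
move=> x y; rewrite /t0 (a20_add _ _ KM) (a02_add _ _ KM).
by rewrite !opprD !opprK addrACA.
Qed.

Lemma subr_t0 b x : x - t0 M b x = a02 M b (a20 M b x).
Proof. by rewrite /t0 opprB addrC subrK. Qed.

Lemma a10_im1t b x : im1t (t0 M b) x -> a10 M b x = 0.
Proof. by case=> y <-; rewrite subr_t0 (rel102 _ _ KM). Qed.

Lemma kerN_a02 b z : kerN p (t0 M b) (a02 M b z).
Proof. by rewrite /kerN -(relN0 _ _ KM) (rel102 _ _ KM) (additive_fn0 (a01_add _ _ KM b)). Qed.

Lemma a12_lift b z : exists y, kerN p (t0 M (~~ b)) y /\ a10 M (~~ b) y = a12 M b z.
Proof.
have [y hy] := a10_surj (~~ b) (a12 M b z); exists y; split=> //.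
by rewrite /kerN -(relN0 _ _ KM) hy (rel012 _ _ KM).
Qed.

Lemma a10_sval_H0cls b x : kerN p (t0 M b) x -> a10 M b (sval (H0cls p (t0 M b) x)) = a10 M b x.
Proof.
move=> hx; apply/eqP; rewrite -subr_eq0 -(a10_add _ _ KM); apply/eqP/a10_im1t.
apply/(genE (im1t_subgroup (t0_additive b))); apply: cls_rel; exact: gen_in.
Qed.

Lemma a10_sval_additive b : additive_fn (fun h : H0 p (t0 M b) => a10 M b (sval h)).
Proof.
move=> h1 h2; have [k1 k2] := (kerN_sval (t0_additive b) h1, kerN_sval (t0_additive b) h2).
have e : h1 - h2 = H0cls p (t0 M b) (sval h1 - sval h2).
  by rewrite (H0cls_sub (t0_additive b) k1 k2) !H0cls_sval.
rewrite e a10_sval_H0cls; first exact: (a10_add _ _ KM b).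
exact: (kerN_subgroup p (t0_additive b)).2.
Qed.

Lemma FD2_H0clsP b x : kerN p (t0 M b) x ->
  FD2 p M b (H0cls p (t0 M b) x) <-> a10 M b x = 0.
Proof.
move=> hx; rewrite (ex0 _ EM); split; last by case=> z <-; exists z.
case=> z /(H0cls_eqP (t0_additive b) (kerN_a02 b z) hx) [w].
rewrite subr_t0 => e; exists (z - a20 M b w).
by rewrite (a02_add _ _ KM) e opprB addrC subrK.
Qed.

Lemma FD2_subgroup b : subgroup (FD2 p M b).
Proof.
split; first by exists 0; rewrite (additive_fn0 (a02_add _ _ KM b)).
move=> _ _ [z1 <-] [z2 <-]; exists (z1 - z2).
by rewrite (a02_add _ _ KM) H0cls_sub //; [apply: t0_additive | apply: kerN_a02 ..].
Qed.

Lemma tilde_FtriP b x : tilde (Ftri p M) b x <-> exists z, a02 M b z = x.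
Proof.
rewrite -(ex0 _ EM); split=> [[hx /(FD2_H0clsP b x hx)] //| hx].
have [z ez] := (ex0 _ EM b x).1 hx.
have hk : kerN p (t0 M b) x by rewrite -ez; apply: kerN_a02.
by split=> //; apply/FD2_H0clsP.
Qed.

Lemma a10q_cls b h : a10q p M b (cls (fun _ => True) (FD2 p M b) h) = a10 M b (sval h).
Proof.
have := (genE (FD2_subgroup b) _).1 (cls_rel (B := FD2 p M b) (genT h)).
rewrite -[_ - h]H0cls_sval => /(FD2_H0clsP b _ (kerN_sval (t0_additive b) _)).
by rewrite a10_sval_additive => /eqP; rewrite subr_eq0 => /eqP.
Qed.

Lemma a10q_inj b : injective (a10q p M b).
Proof.
move=> q1 q2 e; rewrite -(cls_val q1) -(cls_val q2).
apply/(cls_eqP _ (genT _) (genT _)); apply/(genE (FD2_subgroup b)).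
rewrite -[_ - _]H0cls_sval; apply/(FD2_H0clsP b _ (kerN_sval (t0_additive b) _)).
by rewrite a10_sval_additive; apply/eqP; rewrite subr_eq0; apply/eqP.
Qed.

Lemma a10q_additive b : additive_fn (a10q p M b).
Proof.
move=> q1 q2; rewrite -(cls_val q1) -(cls_val q2) -cls_additive !a10q_cls.
exact: a10_sval_additive.
Qed.

Lemma a12_eq_of_H0cls b z z' :
  H0cls p (t0 M b) (a02 M b z) = H0cls p (t0 M b) (a02 M b z') -> a12 M b z = a12 M b z'.
Proof.
case/(H0cls_eqP (t0_additive b) (kerN_a02 b z) (kerN_a02 b z')) => w.
rewrite subr_t0 -(a02_add _ _ KM) => /(a02_inj b) e.
by apply/eqP; rewrite -subr_eq0 -(a12_add _ _ KM) -e (rel120 _ _ KM).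
Qed.

Lemma a10q_Fal b (u : subg (FD2 p M b)) z : H0cls p (t0 M b) (a02 M b z) = sval u ->
  a10q p M (~~ b) (Fal p M (FD2 p M) b u) = a12 M b z.
Proof.
move=> hz; rewrite /Fal /= a10q_cls.
set z1 := epsilon (inhabits (0 : K2 M b)) _.
have ez1 : a02 M b z1 = sval (sval u).
  apply: (epsilon_spec _ (fun z0 => a02 M b z0 = sval (sval u))).
  apply/(ex0 _ EM)/FD2_H0clsP; first exact: kerN_sval (t0_additive b) _.
  by rewrite H0cls_sval -hz; exists z.
have e12 : a12 M b z1 = a12 M b z by apply: a12_eq_of_H0cls; rewrite ez1 H0cls_sval.
set y := epsilon _ _.
have [hy ey] : kerN p (t0 M (~~ b)) y /\ a10 M (~~ b) y = a12 M b z1.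
  by apply: (epsilon_spec _ (fun y0 => kerN p _ y0 /\ _)); apply: a12_lift.
by rewrite a10_sval_H0cls // ey e12.
Qed.

Lemma FD2_sval b (u : subg (FD2 p M b)) : exists z, H0cls p (t0 M b) (a02 M b z) = sval u.
Proof. by have /(genE (FD2_subgroup b)) [z hz] := SQ_gen u; exists z. Qed.

Lemma Fal_additive b : additive_fn (Fal p M (FD2 p M) b).
Proof.
move=> u v; apply: (a10q_inj (~~ b)); rewrite [RHS]a10q_additive.
have [zu hu] := FD2_sval b u; have [zv hv] := FD2_sval b v.
have huv : H0cls p (t0 M b) (a02 M b (zu - zv)) = sval (u - v).
  rewrite (a02_add _ _ KM) (H0cls_sub (t0_additive b) (kerN_a02 b zu) (kerN_a02 b zv)).
  by rewrite hu hv (sval_subg_additive u v).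
by rewrite (a10q_Fal b _ _ huv) (a10q_Fal b u zu hu) (a10q_Fal b v zv hv) (a12_add _ _ KM).
Qed.

Lemma Fal_inj b : injective (Fal p M (FD2 p M) b).
Proof.
apply: additive_fn_inj => [|u]; first exact: Fal_additive.
have [z hz] := FD2_sval b u.
move=> /(congr1 (a10q p M (~~ b))); rewrite (a10q_Fal b u z hz) (additive_fn0 (a10q_additive _)).
case/(ex2' _ EM) => x ex.
apply: sval_subg_inj; rewrite (additive_fn0 sval_subg_additive) -hz -ex.
by apply/(H0cls_eq0 (t0_additive b)); [exact: kerN_a02 | exists x; rewrite subr_t0].
Qed.

Lemma Fal_surj b : surj (Fal p M (FD2 p M) b).
Proof.
move=> q; have hy := kerN_sval (t0_additive (~~ b)) (sval q).
have [z ez] : exists z, a12 M b z = a10 M (~~ b) (sval (sval q)).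
  by apply/(ex1' _ EM b); rewrite (relN0 _ _ KM).
have hu : gen (FD2 p M b) (H0cls p (t0 M b) (a02 M b z)) by apply: gen_in; exists z.
exists (cls (FD2 p M b) (fun h => h = 0) (H0cls p (t0 M b) (a02 M b z))).
by apply: (a10q_inj (~~ b)); rewrite (a10q_Fal b _ z) ?sval_cls_subg.
Qed.

Lemma t0_iter_p b x : iter p (t0 M b) x = x.
Proof.
apply/eqP; rewrite eq_sym -subr_eq0 -Nop_subr; last exact: t0_additive.
by rewrite subr_t0 -(relN0 _ _ KM) (rel201 _ _ KM) (additive_fn0 (a02_add _ _ KM b)).
Qed.

Lemma t0_fixedP b x : x - t0 M b x = 0 <-> exists y, Nop p (t0 M b) y = x.
Proof.
rewrite subr_t0; split=> [h | [y <-]].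
  have : a20 M b x = 0 by apply: (a02_inj b); rewrite h (additive_fn0 (a02_add _ _ KM b)).
  case/(ex0' _ EM) => y1 <-; have [y <-] := a10_surj b y1.
  by exists y; rewrite (relN0 _ _ KM).
by rewrite -(relN0 _ _ KM) (rel201 _ _ KM) (additive_fn0 (a02_add _ _ KM b)).
Qed.

Lemma Ftri_triple : is_triple p (Ftri p M).
Proof.
split=> b /=.
- exact: t0_additive.
- exact: t0_iter_p.
- exact: t0_fixedP.
- exact: subgroup_zp_subspace (FD2_subgroup b).
- exact: Fal_additive.
- by apply: inj_surj_bijective; [apply: Fal_inj | apply: Fal_surj].
Qed.

End ExactKmodule.

Section Intertwining.
Context {p : nat} {M L : KData} (hM : Kexact0 p M) (hL : Kexact0 p L).
Variables (f0 : forall b, K0 M b -> K0 L b) (h1 : forall b, K1 M b -> K1 L b)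
  (h2 : forall b, K2 M b -> K2 L b).
Hypotheses (f0_additive : forall b, additive_fn (f0 b))
  (f0_t0 : forall b x, f0 b (t0 M b x) = t0 L b (f0 b x))
  (h1_a10 : forall b x, h1 b (a10 M b x) = a10 L b (f0 b x))
  (a02_h2 : forall b z, a02 L b (h2 b z) = f0 b (a02 M b z)).

Local Notation H0f := (H0map (T := Ftri p M) (T' := Ftri p L) f0).

Lemma H0f_cls b x : kerN p (t0 M b) x -> H0f b (H0cls p (t0 M b) x) = H0cls p (t0 L b) (f0 b x).
Proof. exact: (@H0map_cls p (Ftri p M) (Ftri p L) f0 b (f0_additive b) (f0_t0 b) x). Qed.

Lemma H0f_a02 b z : H0f b (H0cls p (t0 M b) (a02 M b z)) = H0cls p (t0 L b) (a02 L b (h2 b z)).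
Proof. by rewrite H0f_cls ?a02_h2 //; apply: (kerN_a02 hM). Qed.

Lemma FD2_H0f b h : FD2 p M b h -> FD2 p L b (H0f b h).
Proof. by case=> z <-; exists (h2 b z); rewrite H0f_a02. Qed.

Lemma a10q_sqmap b q : a10q p L b (sqmap (H0f b) q) = h1 b (a10q p M b q).
Proof.
rewrite /sqmap a10q_cls // -[sval q]H0cls_sval H0f_cls; last exact: kerN_sval (t0_additive hM b) _.
by rewrite a10_sval_H0cls ?h1_a10 //; apply: kerN_map (f0_t0 b) (kerN_sval (t0_additive hM b) _).
Qed.

Lemma H0f_additive b : additive_fn (H0f b).
Proof. exact: (@H0map_additive p (Ftri p M) (Ftri p L) f0 b (f0_additive b) (f0_t0 b)). Qed.

Lemma H0f_al_a12 b (u : subg (FD2 p M b)) z : H0cls p (t0 M b) (a02 M b z) = sval u ->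
  al (Ftri p L) b (sqmap (H0f b) u) = sqmap (H0f (~~ b)) (al (Ftri p M) b u) <->
  h1 (~~ b) (a12 M b z) = a12 L b (h2 b z).
Proof.
move=> hz.
have hLz : H0cls p (t0 L b) (a02 L b (h2 b z)) = sval (sqmap (H0f b) u : subg (FD2 p L b)).
  rewrite sval_sqmap_subg; [by rewrite -hz H0f_a02 | exact: H0f_additive |].
  by move=> h /FD2_H0f/gen_in.
have E1 : a10q p L (~~ b) (al (Ftri p L) b (sqmap (H0f b) u)) = a12 L b (h2 b z).
  exact: a10q_Fal hL b _ _ hLz.
have E2 : a10q p L (~~ b) (sqmap (H0f (~~ b)) (al (Ftri p M) b u)) = h1 (~~ b) (a12 M b z).
  by rewrite a10q_sqmap (a10q_Fal hM b u z hz).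
split=> [e | e]; first by rewrite -E2 -e E1.
by apply: (a10q_inj hL (~~ b)); rewrite E1 E2 e.
Qed.

Lemma tmorph_al_iff :
  (forall b u, al (Ftri p L) b (sqmap (H0f b) u) = sqmap (H0f (~~ b)) (al (Ftri p M) b u)) <->
  (forall b z, h1 (~~ b) (a12 M b z) = a12 L b (h2 b z)).
Proof.
split=> h b => [z | u].
  pose u := cls (FD2 p M b) (fun h => h = 0) (H0cls p (t0 M b) (a02 M b z)).
  have hz : H0cls p (t0 M b) (a02 M b z) = sval u.
    by rewrite sval_cls_subg; [| apply: gen_in; exists z].
  exact/(H0f_al_a12 b u z hz).
have [z hz] := FD2_sval hM b u.
exact/(H0f_al_a12 b u z hz).
Qed.

Hypothesis h1_a12 : forall b z, h1 (~~ b) (a12 M b z) = a12 L b (h2 b z).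

Lemma Khom_of_intertwining : is_Khom M L (KH M L f0 h1 h2).
Proof.
have KM := hM.1; have KL := hL.1.
have h2_additive b : additive_fn (h2 b).
  move=> z1 z2; apply: (a02_inj hL b).
  by rewrite (a02_add _ _ KL) !a02_h2 (a02_add _ _ KM) f0_additive.
split=> b /=.
- exact: f0_additive.
- move=> y1 y2; have [x1 <-] := a10_surj hM b y1; have [x2 <-] := a10_surj hM b y2.
  by rewrite -(a10_add _ _ KM) !h1_a10 f0_additive (a10_add _ _ KL).
- exact: h2_additive.
- exact: h1_a10.
- move=> y; have [x <-] := a10_surj hM b y.
  rewrite h1_a10 (relN0 _ _ KM) (relN0 _ _ KL).
  exact: Nop_morph (f0_additive b) (f0_t0 b).
- move=> x; apply: (a02_inj hL b).
  by rewrite a02_h2 -!subr_t0 f0_additive f0_t0.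
- by move=> z; rewrite a02_h2.
- exact: h1_a12.
- by move=> y; rewrite hM.2.2 hL.2.2 (additive_fn0 (h2_additive _)).
Qed.

Lemma tmorph_of_intertwining : is_tmorph p (Ftri p M) (Ftri p L) f0.
Proof.
split=> /=; [exact: f0_additive | exact: f0_t0 | exact: FD2_H0f |].
exact/tmorph_al_iff.
Qed.

End Intertwining.

Section Kmorphisms.
Context {p : nat} {M L : KData} (hM : Kexact0 p M) (hL : Kexact0 p L).

Lemma Khom_t0 (f : KHom M L) : is_Khom M L f ->
  forall b x, h0 f b (t0 M b x) = t0 L b (h0 f b x).
Proof. by move=> hf b x; rewrite /t0 (h0_add _ _ _ hf) (c02 _ _ _ hf) (c20 _ _ _ hf). Qed.

Lemma Khom_tmorph (f : KHom M L) : is_Khom M L f ->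
  is_tmorph p (Ftri p M) (Ftri p L) (h0 f).
Proof.
move=> hf; apply: (tmorph_of_intertwining hM hL (h0 f) (h1 f) (h2 f)).
- exact: h0_add _ _ _ hf.
- exact: Khom_t0.
- exact: c10 _ _ _ hf.
- by move=> b z; rewrite (c02 _ _ _ hf).
- exact: c12 _ _ _ hf.
Qed.

Lemma Khom_faithful (f g : KHom M L) : is_Khom M L f -> is_Khom M L g ->
  (forall b x, h0 f b x = h0 g b x) ->
  (forall b y, h1 f b y = h1 g b y) /\ (forall b z, h2 f b z = h2 g b z).
Proof.
move=> hf hg e; split=> b.
  by move=> y; have [x <-] := a10_surj hM b y; rewrite (c10 _ _ _ hf) (c10 _ _ _ hg) e.
by move=> z; apply: (a02_inj hL b); rewrite -(c02 _ _ _ hf) -(c02 _ _ _ hg) e.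
Qed.

Lemma tmorph_full (f0 : forall b, K0 M b -> K0 L b) :
  is_tmorph p (Ftri p M) (Ftri p L) f0 ->
  exists f : KHom M L, is_Khom M L f /\ forall b x, h0 f b x = f0 b x.
Proof.
case=> f0_additive f0_t0 f0_D2 f0_al.
have KM := hM.1; have KL := hL.1.
have lift b z : exists z', a02 L b z' = f0 b (a02 M b z).
  have hk := kerN_map (f0_additive b) (f0_t0 b) (kerN_a02 hM b z).
  apply/(ex0 _ hL.2.1)/(FD2_H0clsP hL b _ hk).
  rewrite -(H0f_cls f0 f0_additive f0_t0 b _ (kerN_a02 hM b z)).
  by apply: f0_D2; exists z.
pose h2 b := lift_along (a02 L b) (fun z => f0 b (a02 M b z)).
pose h1 b := descend_along (a10 M b) (fun x => a10 L b (f0 b x)).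
have a02_h2 b z : a02 L b (h2 b z) = f0 b (a02 M b z) := lift_alongK (lift b) z.
have h1_a10 b x : h1 b (a10 M b x) = a10 L b (f0 b x).
  apply: descend_alongK => [| y1 y2 | x0]; first exact (a10_add _ _ KM b).
    by rewrite f0_additive (a10_add _ _ KL).
  by case/(ex0 _ hM.2.1) => z <-; rewrite -a02_h2 (rel102 _ _ KL).
have h1_a12 := (tmorph_al_iff hM hL f0 h1 h2 f0_additive f0_t0 h1_a10 a02_h2).1 f0_al.
exists (KH M L f0 h1 h2); split=> //.
exact: (Khom_of_intertwining hM hL f0 h1 h2 f0_additive f0_t0 h1_a10 a02_h2 h1_a12).
Qed.

Lemma Khom_injectiveP (f : KHom M L) : is_Khom M L f ->
  (forall b, injective (h0 f b) /\ injective (h1 f b) /\ injective (h2 f b)) <->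
  (forall b, injective (h0 f b)) /\
  (forall b x, tilde (Ftri p L) b (h0 f b x) <-> tilde (Ftri p M) b x).
Proof.
move=> hf; split=> [inj | [inj0 htilde] b].
  split=> [b | b x]; first by case: (inj b).
  rewrite (tilde_FtriP hL) (tilde_FtriP hM); split; last first.
    by case=> z <-; exists (h2 f b z); rewrite (c02 _ _ _ hf).
  move/(ex0 _ hL.2.1) => h; apply/(ex0 _ hM.2.1); apply: (proj1 (proj2 (inj b))).
  by rewrite (c10 _ _ _ hf) h (additive_fn0 (h1_add _ _ _ hf b)).
split; first exact: inj0.
split.
  apply: (additive_fn_inj (h1_add _ _ _ hf b)) => y; have [x <-] := a10_surj hM b y.
  rewrite (c10 _ _ _ hf) => /(ex0 _ hL.2.1).
  rewrite -(tilde_FtriP hL) htilde (tilde_FtriP hM) => -[z <-].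
  exact (rel102 _ _ hM.1 b z).
by move=> z1 z2 e; apply: (a02_inj hM b); apply: (inj0 b); rewrite !(c02 _ _ _ hf) e.
Qed.

Lemma Khom_surjectiveP (f : KHom M L) : is_Khom M L f ->
  (forall b, surj (h0 f b) /\ surj (h1 f b) /\ surj (h2 f b)) <->
  (forall b, surj (h0 f b)) /\
  (forall b y, tilde (Ftri p L) b y <-> exists x, tilde (Ftri p M) b x /\ h0 f b x = y).
Proof.
move=> hf; split=> [surj | [surj0 htilde] b].
  split=> [b | b y]; first by case: (surj b).
  rewrite (tilde_FtriP hL); split.
    case=> z' <-; have [z <-] := (proj2 (proj2 (surj b))) z'.
    exists (a02 M b z); split; last exact (c02 _ _ _ hf b z).
    by apply/(tilde_FtriP hM); exists z.
  by case=> x [/(tilde_FtriP hM) [z <-] <-]; exists (h2 f b z); rewrite (c02 _ _ _ hf).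
split; first exact: surj0.
split.
  move=> y'; have [x' <-] := a10_surj hL b y'; have [x <-] := surj0 b x'.
  by exists (a10 M b x); rewrite (c10 _ _ _ hf).
move=> z'; have : tilde (Ftri p L) b (a02 L b z') by apply/(tilde_FtriP hL); exists z'.
case/htilde => x [/(tilde_FtriP hM) [z <-] e]; exists z.
by apply: (a02_inj hL b); rewrite -(c02 _ _ _ hf).
Qed.

End Kmorphisms.

Lemma tmorph_inverse {p} {T T' : TData p} {f : forall b, T0 T b -> T0 T' b}
    {g : forall b, T0 T' b -> T0 T b} :
  is_tmorph p T T' f -> (forall b, cancel (f b) (g b)) -> (forall b, cancel (g b) (f b)) ->
  (forall b h, D2 T' b h -> D2 T b (H0map g b h)) -> is_tmorph p T' T g.
Proof.
case=> f_add f_t f_D2 f_al fK gK g_D2.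
have g_add b : additive_fn (g b).
  by move=> x y; rewrite -{1}(gK b x) -{1}(gK b y) -f_add fK.
have g_t b x : g b (tt T' b x) = tt T b (g b x) by rewrite -{1}(gK b x) -f_t fK.
have H0f_add b : additive_fn (H0map f b) := H0map_additive (f_add b) (f_t b).
have H0g_add b : additive_fn (H0map g b) := H0map_additive (g_add b) (g_t b).
have H0fK b : cancel (H0map f b) (H0map g b).
  apply: sqmap_cancel (f_add b) _ (g_add b) _ _ (fK b) => x.
  - by move/(kerN_map (f_add b) (f_t b))/gen_in.
  - by move/(kerN_map (g_add b) (g_t b))/gen_in.
  - by move/(im1t_map (g_add b) (g_t b))/gen_in.
have H0gK b : cancel (H0map g b) (H0map f b).
  apply: sqmap_cancel (g_add b) _ (f_add b) _ _ (gK b) => x.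
  - by move/(kerN_map (g_add b) (g_t b))/gen_in.
  - by move/(kerN_map (f_add b) (f_t b))/gen_in.
  - by move/(im1t_map (f_add b) (f_t b))/gen_in.
split=> // b u.
have ev : sqmap (H0map f b) (sqmap (H0map g b) u : subg (D2 T b)) = u.
  apply: sqmap_cancel (H0g_add b) _ (H0f_add b) _ _ (H0gK b) u => h.
  - by move/g_D2/gen_in.
  - by move/f_D2/gen_in.
  - by move=> ->; rewrite additive_fn0 //; apply: gen0.
rewrite -{2}ev f_al.
apply: esym; apply: sqmap_cancel (H0f_add (~~ b)) _ (H0g_add (~~ b)) _ _ (H0fK (~~ b)) _ => h.
- by move=> _; apply: genT.
- by move=> _; apply: genT.
- by move/g_D2/gen_in.
Qed.

Definition tilde_cls {p} (T : TData p) b (z : subg (tilde T b)) : subg (D2 T b) :=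
  cls (D2 T b) (fun h => h = 0) (H0cls p (tt T b) (sval z)).

Definition quo_lift {p} (T : TData p) b (q : quog (D2 T b)) : quog (tilde T b) :=
  cls (fun _ => True) (tilde T b) (sval (sval q)).

Definition Kmod_of_triple {p} (T : TData p) : KData :=
  @KD (T0 T) (fun b => quog (tilde T b)) (fun b => subg (tilde T b))
    (fun b x => cls (fun _ => True) (tilde T b) x)
    (fun b y => Nop p (tt T b) (sval y))
    (fun b x => cls (tilde T b) (fun y => y = 0) (x - tt T b x))
    (fun b z => sval z)
    (fun b z => quo_lift T (~~ b) (al T b (tilde_cls T b z)))
    (fun b _ => 0).

Section TripleKmodule.
Context {p : nat} {T : TData p} (hT : is_triple p T).
Local Notation K := (Kmod_of_triple T).
Let t_additive b : additive_fn (tt T b) := tt_add _ _ hT b.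

Lemma D2_subgroup b : subgroup (D2 T b).
Proof. by have [D0 [DB _]] := D2_sub _ _ hT b. Qed.

Lemma tilde_subgroup b : subgroup (tilde T b).
Proof.
have [D0 DB] := D2_subgroup b.
split; first by split; rewrite ?(additive_fn0 (additive_fn_Nop p (t_additive b))).
move=> u v [hu Du] [hv Dv]; split; first exact: (kerN_subgroup p (t_additive b)).2.
by rewrite H0cls_sub //; apply: DB.
Qed.

Lemma kerN_of_im1t b x : im1t (tt T b) x -> kerN p (tt T b) x.
Proof. by apply: (im1t_kerN (t_additive b)); apply: (tt_p _ _ hT b). Qed.

Lemma tilde_of_im1t b x : im1t (tt T b) x -> tilde T b x.
Proof.
move=> hx; have hk := kerN_of_im1t b x hx; split=> //.
rewrite (proj2 (H0cls_eq0 (t_additive b) hk) hx).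
exact: (D2_sub _ _ hT b).1.
Qed.

Lemma sval_a20K b x : sval (a20 K b x) = x - tt T b x.
Proof. by apply: sval_cls_subg; apply: gen_in; apply: tilde_of_im1t; exists x. Qed.

Lemma t0K b x : t0 K b x = tt T b x.
Proof. by rewrite /t0 [a02 _ _ _]sval_a20K opprB addrC subrK. Qed.

Lemma a01K_cls b x : a01 K b (cls (fun _ => True) (tilde T b) x) = Nop p (tt T b) x.
Proof.
apply/eqP; rewrite -subr_eq0 -(additive_fn_Nop p (t_additive b)); apply/eqP.
by have /(genE (tilde_subgroup b)) [] := cls_rel (B := tilde T b) (genT x).
Qed.

Lemma quo_lift_cls b x : kerN p (tt T b) x ->
  quo_lift T b (cls (fun _ => True) (D2 T b) (H0cls p (tt T b) x)) =
  cls (fun _ => True) (tilde T b) x.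
Proof.
move=> hx; apply/(cls_eqP _ (genT _) (genT _))/(genE (tilde_subgroup b)).
set q := cls _ _ _; have hq := kerN_sval (t_additive b) (sval q).
have hk : kerN p (tt T b) (sval (sval q) - x) by apply: (kerN_subgroup p (t_additive b)).2.
split=> //; rewrite H0cls_sub // H0cls_sval.
by apply/(genE (D2_subgroup b)); apply: cls_rel; apply: genT.
Qed.

Lemma quogE b (q : quog (D2 T b)) :
  q = cls (fun _ => True) (D2 T b) (H0cls p (tt T b) (sval (sval q))).
Proof. by rewrite H0cls_sval cls_val. Qed.

Lemma quo_lift_additive b : additive_fn (quo_lift T b).
Proof.
move=> q1 q2; have k1 := kerN_sval (t_additive b) (sval q1).
have k2 := kerN_sval (t_additive b) (sval q2).
have k12 := (kerN_subgroup p (t_additive b)).2 _ _ k1 k2.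
rewrite (quogE b q1) (quogE b q2) -cls_additive -(H0cls_sub (t_additive b) k1 k2).
by rewrite !quo_lift_cls // cls_additive.
Qed.

Lemma quo_lift_inj b : injective (quo_lift T b).
Proof.
apply: additive_fn_inj => [|q]; first exact: quo_lift_additive.
move/(cls_eq0 _ (genT _))/(genE (tilde_subgroup b)) => -[_ hD].
by rewrite (quogE b q); apply/(cls_eq0 _ (genT _)); apply: gen_in.
Qed.

Lemma tilde_sval b (z : subg (tilde T b)) : tilde T b (sval z).
Proof. by apply/(genE (tilde_subgroup b)); apply: SQ_gen. Qed.

Lemma tilde_sval_D2 b (u : subg (D2 T b)) : tilde T b (sval (sval u)).
Proof.
split; first exact: kerN_sval (t_additive b) _.
by rewrite H0cls_sval; apply/(genE (D2_subgroup b)); apply: SQ_gen.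
Qed.

Lemma sval_tilde_cls b z : sval (tilde_cls T b z) = H0cls p (tt T b) (sval z).
Proof. by apply: sval_cls_subg; apply: gen_in; case: (tilde_sval b z). Qed.

Lemma tilde_cls_additive b : additive_fn (tilde_cls T b).
Proof.
move=> z1 z2; apply: sval_subg_inj.
rewrite [RHS]sval_subg_additive !sval_tilde_cls (sval_subg_additive z1 z2) H0cls_sub //.
  by case: (tilde_sval b z1).
by case: (tilde_sval b z2).
Qed.

Lemma a02KE b (z : K2 K b) : a02 K b z = sval z.
Proof. by []. Qed.

Lemma a12KE b z : a12 K b z = quo_lift T (~~ b) (al T b (tilde_cls T b z)).
Proof. by []. Qed.

Lemma a12K_additive b : additive_fn (a12 K b).
Proof.
move=> z1 z2; rewrite !a12KE tilde_cls_additive (al_add _ _ hT).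
exact: quo_lift_additive.
Qed.

Lemma a12K_a20K b x : a12 K b (a20 K b x) = 0.
Proof.
have e : tilde_cls T b (a20 K b x) = 0.
  apply: sval_subg_inj; rewrite sval_tilde_cls sval_a20K (additive_fn0 sval_subg_additive).
  by apply/(H0cls_eq0 (t_additive b)); [apply: kerN_of_im1t|]; exists x.
by rewrite a12KE e (additive_fn0 (al_add _ _ hT b)) (additive_fn0 (quo_lift_additive _)).
Qed.

Lemma s1K b y : s1 K b y = y.
Proof.
rewrite /s1; have -> : a21 K b y = 0 by [].
by rewrite (additive_fn0 (a12K_additive _)); case: b y => y; rewrite /= subr0.
Qed.

Lemma s2K b z : s2 K b z = z.
Proof.
rewrite /s2; have -> : a21 K (~~ b) (a12 K b z) = 0 by [].
by case: b z => z; rewrite /= subr0.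
Qed.

Lemma Nop_t2K b z : Nop p (t2 K b) z = 0.
Proof.
apply: sval_subg_inj; rewrite (additive_fn0 sval_subg_additive).
rewrite (Nop_morph p z sval_subg_additive (t' := tt T b)); first by case: (tilde_sval b z).
move=> w; rewrite /t2 (sval_subg_additive w (a20 K b (a02 K b w))).
by rewrite sval_a20K opprB addrC subrK.
Qed.

Lemma Kmod_Kmodule : is_Kmodule p K.
Proof.
split=> b.
- exact: cls_additive.
- move=> y1 y2; rewrite -(cls_val y1) -(cls_val y2) -cls_additive !a01K_cls.
  exact: (additive_fn_Nop p (t_additive b)).
- move=> x y; have hz z : gen (tilde T b) (z - tt T b z).
    by apply: gen_in; apply: tilde_of_im1t; exists z.
  by rewrite /= -cls_sub // (t_additive b) !opprD !opprK addrACA.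
- exact: sval_subg_additive.
- exact: a12K_additive.
- by move=> y1 y2; rewrite subrr.
- by move=> z; rewrite a12KE /quo_lift a01K_cls; apply: kerN_sval (t_additive _) _.
- by move=> y; apply: (additive_fn0 sval_subg_additive).
- by move=> z; apply/(cls_eq0 _ (genT _)); apply: SQ_gen.
- exact: a12K_a20K.
- move=> y; rewrite /= Nop_subr; last exact: t_additive.
  by rewrite (tt_p _ _ hT) subrr cls0.
- by [].
- by move=> x; rewrite a01K_cls; apply: eq_Nop => y; rewrite t0K.
- move=> y; rewrite (eq_Nop _ _ (s1K b)) Nop_id -{2}(cls_val y).
  rewrite -(additive_fnMn (cls_additive (tilde T b))).
  apply/(cls_eqP _ (genT _) (genT _))/(genE (tilde_subgroup b)).
  by apply: tilde_of_im1t; apply: im1t_Nop_subr_mulrn.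
- by move=> z; rewrite Nop_t2K add0r (eq_Nop _ _ (s2K b)) Nop_id.
Qed.

Lemma a20K_eq0 b x : a20 K b x = 0 <-> x - tt T b x = 0.
Proof.
rewrite -sval_a20K; split=> [-> | e]; first exact: (additive_fn0 sval_subg_additive).
by apply: sval_subg_inj; rewrite e (additive_fn0 sval_subg_additive).
Qed.

Lemma a12K_eq0 b z : a12 K b z = 0 -> exists x, a20 K b x = z.
Proof.
rewrite a12KE -(additive_fn0 (quo_lift_additive (~~ b))) => /quo_lift_inj.
rewrite -(additive_fn0 (al_add _ _ hT b)) => /(bij_inj (al_bij _ _ hT b)) /(congr1 sval).
rewrite sval_tilde_cls (additive_fn0 sval_subg_additive).
case: (tilde_sval b z) => hk _ /(H0cls_eq0 (t_additive b) hk) [x ex].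
by exists x; apply: sval_subg_inj; rewrite sval_a20K.
Qed.

Lemma a12K_surj b y : a01 K (~~ b) y = 0 -> exists z, a12 K b z = y.
Proof.
move=> hy; have [g _ alK] := al_bij _ _ hT b.
pose u := g (cls (fun _ => True) (D2 T (~~ b)) (H0cls p (tt T (~~ b)) (sval y))).
have hu := tilde_sval_D2 b u.
exists (cls (tilde T b) (fun x => x = 0) (sval (sval u))); rewrite a12KE.
have -> : tilde_cls T b (cls (tilde T b) (fun x => x = 0) (sval (sval u))) = u.
  apply: sval_subg_inj; rewrite sval_tilde_cls sval_cls_subg ?H0cls_sval //.
  exact: gen_in.
by rewrite alK quo_lift_cls ?cls_val.
Qed.

Lemma Kmod_exact : is_exact K.
Proof.
split=> b.
- by move=> y; split=> // _; exists (sval y); apply: cls_val.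
- move=> z; split=> [e | [y <-]]; last exact: (additive_fn0 sval_subg_additive).
  exists 0; apply: sval_subg_inj; rewrite (additive_fn0 sval_subg_additive).
  exact: (esym e).
- move=> x; split=> [/(cls_eq0 _ (genT _)) hx | [z <-]].
    by exists (cls (tilde T b) (fun y => y = 0) x); apply: sval_cls_subg.
  by apply/(cls_eq0 _ (genT _)); apply: SQ_gen.
- by move=> z; split=> [/a12K_eq0 | [x <-]]; last exact: a12K_a20K.
- move=> y; split=> [/a12K_surj // | [z <-]].
  by rewrite a12KE /quo_lift a01K_cls; apply: kerN_sval (t_additive _) _.
- move=> x; rewrite a20K_eq0 (tt_ker _ _ hT); split=> [[y <-] | [y <-]].
    by exists (cls (fun _ => True) (tilde T b) y); rewrite a01K_cls.
  by exists (sval y).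
Qed.

Lemma Kmod_exact0 : Kexact0 p K.
Proof. by split; [exact: Kmod_Kmodule | split; [exact: Kmod_exact | by []]]. Qed.

Local Notation H0in := (H0map (T := T) (T' := Ftri p K) (fun b x => x)).
Local Notation H0out := (H0map (T := Ftri p K) (T' := T) (fun b x => x)).

Lemma H0in_cls b x : kerN p (tt T b) x -> H0in b (H0cls p (tt T b) x) = H0cls p (t0 K b) x.
Proof. by move=> hx; apply: H0map_cls hx => [y z | y] //=; rewrite t0K. Qed.

Lemma H0out_cls b x : kerN p (t0 K b) x -> H0out b (H0cls p (t0 K b) x) = H0cls p (tt T b) x.
Proof.
move=> hx; apply: (@H0map_cls p (Ftri p K) T (fun b x => x) b) hx => [y z | y] //=.
by rewrite t0K.
Qed.

Lemma FD2_H0in b h : D2 T b h -> FD2 p K b (H0in b h).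
Proof.
move=> hD; have hk := kerN_sval (t_additive b) h.
rewrite -(H0cls_sval h) H0in_cls //.
exists (cls (tilde T b) (fun y => y = 0) (sval h)).
rewrite a02KE sval_cls_subg //.
by apply: gen_in; split; rewrite ?H0cls_sval.
Qed.

Lemma D2_H0out b h : FD2 p K b h -> D2 T b (H0out b h).
Proof.
case=> z <-; case: (tilde_sval b z) => hk hD; rewrite H0out_cls //.
by rewrite /kerN (eq_Nop _ _ (t0K b)).
Qed.

Lemma tmorph_to_Kmod : is_tmorph p T (Ftri p K) (fun b x => x).
Proof.
split=> b //=; [by move=> x; rewrite t0K | exact: FD2_H0in |] => u.
have hK := Kmod_exact0.
pose z := cls (tilde T b) (fun y => y = 0) (sval (sval u)).
have hz : sval z = sval (sval u) := sval_cls_subg (gen_in (tilde_sval_D2 b u)).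
have hKz : H0cls p (t0 K b) (a02 K b z) = sval (sqmap (H0in b) u : subg (FD2 p K b)).
  rewrite sval_sqmap_subg.
  - rewrite -{1}(H0cls_sval (sval u)) H0in_cls; first by rewrite a02KE hz.
    exact: (kerN_sval (t_additive b)).
  - exact (@H0map_additive p T (Ftri p K) (fun b x => x) b
             (fun _ _ => erefl) (fun x => esym (t0K b x))).
  - by move=> h /FD2_H0in/gen_in.
have E1 : a10q p K (~~ b) (al (Ftri p K) b (sqmap (H0in b) u)) = quo_lift T (~~ b) (al T b u).
  rewrite (a10q_Fal hK b _ z hKz) a12KE; congr (quo_lift _ _ (al _ _ _)).
  by apply: sval_subg_inj; rewrite sval_tilde_cls hz H0cls_sval.
have E2 : a10q p K (~~ b) (sqmap (H0in (~~ b)) (al T b u)) = quo_lift T (~~ b) (al T b u).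
  rewrite /sqmap (a10q_cls hK) -{1}(H0cls_sval (sval (al T b u))) H0in_cls;
    last exact: (kerN_sval (t_additive (~~ b))).
  rewrite (a10_sval_H0cls hK) // /kerN (eq_Nop _ _ (t0K _)).
  exact: (kerN_sval (t_additive (~~ b))).
by apply: (a10q_inj hK (~~ b)); rewrite E1 E2.
Qed.

Lemma tmorph_from_Kmod : is_tmorph p (Ftri p K) T (fun b x => x).
Proof. exact (tmorph_inverse tmorph_to_Kmod (fun _ _ => erefl) (fun _ _ => erefl) D2_H0out). Qed.

End TripleKmodule.

Theorem theorem8p1 (p : nat) (hp : prime p) :
  (* the functor M |-> (M_0, dot M_2, dot alpha) lands in the category of triples *)
  (forall M : KData, Kexact0 p M -> is_triple p (Ftri p M))
  /\ (* ... and sends K-module morphisms f to triple morphisms f_0 *)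
  (forall (M L : KData) (f : KHom M L), Kexact0 p M -> Kexact0 p L -> is_Khom M L f ->
     is_tmorph p (Ftri p M) (Ftri p L) (h0 f))
  /\ (* faithful *)
  (forall (M L : KData) (f g : KHom M L), Kexact0 p M -> Kexact0 p L ->
     is_Khom M L f -> is_Khom M L g -> (forall b x, h0 f b x = h0 g b x) ->
     (forall b y, h1 f b y = h1 g b y) /\ (forall b z, h2 f b z = h2 g b z))
  /\ (* full *)
  (forall (M L : KData) (f0 : forall b, K0 M b -> K0 L b), Kexact0 p M -> Kexact0 p L ->
     is_tmorph p (Ftri p M) (Ftri p L) f0 ->
     exists f : KHom M L, is_Khom M L f /\ forall b x, h0 f b x = f0 b x)
  /\ (* essentially surjective *)
  (forall T : TData p, is_triple p T ->
     exists M : KData, Kexact0 p M /\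
       exists (f : forall b, T0 T b -> K0 M b) (g : forall b, K0 M b -> T0 T b),
         is_tmorph p T (Ftri p M) f /\ is_tmorph p (Ftri p M) T g /\
         (forall b x, g b (f b x) = x) /\ (forall b x, f b (g b x) = x))
  /\ (* injectivity criterion *)
  (forall (M L : KData) (f : KHom M L), Kexact0 p M -> Kexact0 p L -> is_Khom M L f ->
     ((forall b, injective (h0 f b) /\ injective (h1 f b) /\ injective (h2 f b)) <->
      ((forall b, injective (h0 f b)) /\
       (forall b x, tilde (Ftri p L) b (h0 f b x) <-> tilde (Ftri p M) b x))))
  /\ (* surjectivity criterion *)
  (forall (M L : KData) (f : KHom M L), Kexact0 p M -> Kexact0 p L -> is_Khom M L f ->
     ((forall b, surj (h0 f b) /\ surj (h1 f b) /\ surj (h2 f b)) <->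
      ((forall b, surj (h0 f b)) /\
       (forall b y, tilde (Ftri p L) b y <->
                    exists x, tilde (Ftri p M) b x /\ h0 f b x = y)))).
Proof.
split; first by move=> M hM; exact: (Ftri_triple hM).
split; first by move=> M L f hM hL; exact: (Khom_tmorph hM hL).
split; first by move=> M L f g hM hL; exact: (Khom_faithful hM hL).
split; first by move=> M L f0 hM hL; exact: (tmorph_full hM hL).
split.
  move=> T hT; exists (Kmod_of_triple T); split; first exact: (Kmod_exact0 hT).
  exists (fun b x => x), (fun b x => x).
  by split; [exact: (tmorph_to_Kmod hT) | split; [exact: (tmorph_from_Kmod hT) | split]].
split; first by move=> M L f hM hL; exact: (Khom_injectiveP hM hL).
by move=> M L f hM hL; exact: (Khom_surjectiveP hM hL).
Qed.
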